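(* Let $q\ge 2$, $n\ge 1$, $1\le \ell\le n$, $f:\mathbb{Z}_q^n\to\mathbb{R}$, and let $M$ be the $q$-ary Möbius transform of $f$. Assume $M[\mathbf{k}]=0$ for every $\mathbf{k}$ with $\|\mathbf{k}\|_0>\ell$. Then for every $T\subseteq D$ with $|T|\le\ell$, the Faith-Shap interaction index of order $\ell$ satisfies $$I^{FSI}(T)\;=\;a(v,T)\;=\;(-1)^{|T|}\sum_{\substack{\mathbf{k}\in\mathbb{Z}_q^n\\ k_j\neq 0\ \forall j\in T}}\frac{1}{q^{\|\mathbf{k}\|_0}}\,M[\mathbf{k}].$$
   Context: Elements of $\mathbb{Z}_q^n$ are vectors $\mathbf{m}=(m_1,\dots,m_n)$ with $m_i\in\{0,1,\dots,q-1\}$. $D=\{1,\dots,n\}$, and for $T\subseteq D$, $\bar T=D\setminus T$. $\|\mathbf{k}\|_0$ is the number of nonzero coordinates of $\mathbf{k}$. Partial order: $\mathbf{m}\le\mathbf{k}$ iff for every $i$, $m_i=k_i$ or $m_i=0$; in that case $\mathbf{k}-\mathbf{m}$ is the coordinatewise integer difference. The $q$-ary Möbius transform of $f$ is $M[\mathbf{k}]=\sum_{\mathbf{m}\le\mathbf{k}}(-1)^{\|\mathbf{k}-\mathbf{m}\|_0} f(\mathbf{m})$. The value function (query encoded as the all-zeros vector, uniform marginalization) is $v_T=\frac{1}{q^{|\bar T|}}\sum_{\mathbf{r}\in\mathbb{Z}_q^n:\ \mathbf{r}_T=\mathbf{0}} f(\mathbf{r})$ for $T\subseteq D$, and its set Möbius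 transform is $a(v,S)=\sum_{T\subseteq S}(-1)^{|S|-|T|}v_T$. The Faith-Shap interaction index of maximum order $\ell$ is defined, for $T\subseteq D$ with $|T|\le \ell$, by $$I^{FSI}(T)=a(v,T)+(-1)^{\ell-|T|}\frac{|T|}{\ell+|T|}\binom{\ell}{|T|}\sum_{\substack{S\supsetneq T\\ |S|>\ell}}\frac{\binom{|S|-1}{\ell}}{\binom{|S|+\ell-1}{\ell+|T|}}\,a(v,S).$$ *)

From HB Require Import structures.
From mathcomp Require Import all_boot all_order all_algebra.
Set Implicit Arguments. Unset Strict Implicit. Unset Printing Implicit Defensive.
Import Order.TTheory GRing.Theory Num.Theory.
Local Open Scope ring_scope.

(* Z_q^n is represented by {ffun 'I_n -> 'I_q}; D = 'I_n; subsets T : {set 'I_n}. *)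
Section Defs.
Variables (R : realFieldType) (q n : nat).
Notation vec := {ffun 'I_n -> 'I_q}.

Definition nnz (k : vec) : nat := #|[set i | val (k i) != 0%N]|.

Definition vle (m k : vec) : bool :=
  [forall i, (m i == k i) || (val (m i) == 0%N)].

(* ||k - m||_0 for the coordinatewise difference (used only when m <= k,
   where every coordinate difference is 0 or k_i >= 0, so nat subtraction
   is the integer difference) *)
Definition nnz_diff (k m : vec) : nat :=
  #|[set i | (val (k i) - val (m i))%N != 0%N]|.

Definition qmobius (f : vec -> R) (k : vec) : R :=
  \sum_(m : vec | vle m k) (-1) ^+ nnz_diff k m * f m.

Definition vfun (f : vec -> R) (T : {set 'I_n}) : R :=
  ((q%:R ^+ #|~: T|)^-1) *
  \sum_(r : vec | [forall i in T, val (r i) == 0%N]) f r.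

Definition amob (f : vec -> R) (S : {set 'I_n}) : R :=
  \sum_(T in powerset S) (-1) ^+ (#|S| - #|T|) * vfun f T.

Definition FSI (f : vec -> R) (ell : nat) (T : {set 'I_n}) : R :=
  amob f T +
  (-1) ^+ (ell - #|T|) * ((#|T|%:R / (ell + #|T|)%:R) * 'C(ell, #|T|)%:R) *
  \sum_(S : {set 'I_n} | (T \proper S) && (ell < #|S|)%N)
     ('C(#|S| - 1, ell)%:R / 'C(#|S| + ell - 1, ell + #|T|)%:R) * amob f S.

End Defs.

(** Both sides are linear in [f], so it suffices to compare the coefficient of
    each [f m].  In [a(v,S)] the coefficient is an alternating sum over the
    subsets of [S] on which [m] vanishes, which the binomial theorem evaluates
    to [(-1)^|S| q^-n (1 - q)^z], where [z] is the number of zeros of [m] in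
    [S].  On the Möbius side the coefficient is a sum over all [k >= m] that
    are nonzero on [S]; the summand factors coordinatewise, and each
    coordinate contributes [(1 - q)/q] if it is a zero of [m] in [S] and [1/q]
    otherwise, which gives the same value.  The Faith-Shap correction only
    involves [a(v,S)] with [|S| > l]; by the formula just proved these are
    sums of [M[k]] with [||k||_0 >= |S| > l], hence vanish. *)
From HB Require Import structures.
From mathcomp Require Import all_boot all_order all_algebra.
From mathcomp Require Import ring.
Import Order.TTheory GRing.Theory Num.Theory.
Local Open Scope ring_scope.

Lemma prodr_if_forall (R : comPzRingType) (I : finType) (c : pred I) (F : I -> R) :
  \prod_i (if c i then F i else 0) = if [forall i, c i] then \prod_i F i else 0.
Proof.
case: (boolP [forall i, c i]) => [/forallP c_all | /forallPn [i ci_false]].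
  by apply: eq_bigr => i _; rewrite c_all.
by rewrite (bigD1 i) //= (negbTE ci_false) mul0r.
Qed.

Lemma prodr_cond_const (R : comPzRingType) (I : finType) (c : pred I) (x : R) :
  \prod_i (if c i then x else 1) = x ^+ #|[set i | c i]|.
Proof. by rewrite -big_mkcond -prodr_const; apply: eq_bigl => i; rewrite inE. Qed.

Lemma sum_powerset_expr (R : comPzRingType) (I : finType) (A : {set I}) (x : R) :
  \sum_(T in powerset A) x ^+ #|T| = (1 + x) ^+ #|A|.
Proof.
rewrite -prodr_const [RHS]big_mkcond /=.
transitivity (\prod_i ((if i \in A then x else 0) + 1)); last first.
  by apply: eq_bigr => i _; case: ifP => _; rewrite ?add0r // addrC.
rewrite bigA_distr big_mkcond /=; apply: eq_bigr => J _; rewrite powersetE.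
case: (boolP (J \subset A)) => [sJA | /subsetPn [i iJ iNA]].
  rewrite -prodr_const big_mkcond /=; apply: eq_bigr => i _.
  by case: ifP => // iJ; rewrite (subsetP sJA).
by rewrite (bigD1 i) //= iJ (negbTE iNA) mul0r.
Qed.

Lemma signr_subn (R : pzRingType) (a b : nat) :
  (b <= a)%N -> (-1) ^+ (a - b) = (-1) ^+ a * (-1) ^+ b :> R.
Proof. by move=> le_ba; rewrite -{2}(subnK le_ba) exprD -mulrA -expr2 sqrr_sign mulr1. Qed.

Section MobiusExpansion.
Variables (R : realFieldType) (q' n : nat).
Local Notation q := q'.+1.
Local Notation vec := {ffun 'I_n -> 'I_q}.

Definition zeros (m : vec) : {set 'I_n} := [set i | val (m i) == 0%N].

(* The coefficient of [f m] in [\sum_(k | k != 0 on S) q^-||k|| M[k]]. *)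
Definition mobius_weight (S : {set 'I_n}) (m k : vec) : R :=
  if [forall j in S, val (k j) != 0%N] && vle m k then
    (q%:R ^+ nnz k)^-1 * (-1) ^+ nnz_diff k m
  else 0.

Definition mobius_weight_factor (S : {set 'I_n}) (m : vec) (i : 'I_n) (x : 'I_q) : R :=
  if ((i \in S) ==> (val x != 0%N)) && ((m i == x) || (val (m i) == 0%N)) then
    (if val x != 0%N then (q%:R)^-1 else 1) *
    (if (val x - val (m i))%N != 0%N then -1 else 1)
  else 0.

Lemma natq_neq0 : (q%:R : R) != 0.
Proof. by rewrite pnatr_eq0. Qed.

Lemma mobius_weight_prod (S : {set 'I_n}) (m k : vec) :
  mobius_weight S m k = \prod_i mobius_weight_factor S m i (k i).
Proof.
rewrite /mobius_weight /mobius_weight_factor prodr_if_forall big_split /= !prodr_cond_const -exprVn.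
congr (if _ then _ else _).
apply/andP/forallP => [[/forallP nzS /forallP le_mk] i | all_i].
  by rewrite nzS le_mk.
by split; apply/forallP => i; case/andP: (all_i i).
Qed.

Lemma sum_mobius_weight_factor (S : {set 'I_n}) (m : vec) (i : 'I_n) :
  \sum_x mobius_weight_factor S m i x =
    (if i \in S :&: zeros m then 1 - q%:R else 1) / q%:R.
Proof.
rewrite /mobius_weight_factor !inE; case: (boolP (val (m i) == 0%N)) => [mi0 | mi_nz].
  rewrite big_ord_recl /= (eqP mi0) orbT.
  have bump_nz (j : 'I_q') : (bump 0 j - 0)%N != 0%N.
    by rewrite subn0 eq_sym neq_bump.
  under eq_bigr => j _ do rewrite bump_nz implybT orbT /= mulrN1.
  rewrite sumr_const card_ord andbT -mulr_natr -natr1.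
  by case: (i \in S) => /=; field; rewrite natr1 natq_neq0.
rewrite (bigD1 (m i)) //= eqxx mi_nz implybT subnn eqxx /= andbF mulr1 mul1r.
by rewrite big1 ?addr0 // => x x_neq; rewrite [m i == x]eq_sym (negbTE x_neq) andbF.
Qed.

(* Coordinatewise factorisation: the sum over [k] is a product of sums over [k i]. *)
Lemma sum_mobius_weight (S : {set 'I_n}) (m : vec) :
  \sum_k mobius_weight S m k = (q%:R ^+ n)^-1 * (1 - q%:R) ^+ #|S :&: zeros m|.
Proof.
under eq_bigr => k _ do rewrite mobius_weight_prod.
rewrite -bigA_distr_bigA /=.
under eq_bigr => i _ do rewrite sum_mobius_weight_factor.
rewrite big_split /= prodr_cond_const prodr_const card_ord exprVn mulrC.
by rewrite cardsE.
Qed.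

(* Only the [T] inside [S :&: zeros m] contribute, each with weight [(-q)^|T|] up to a common factor. *)
Lemma sum_powerset_vfun_weight (S : {set 'I_n}) (m : vec) :
  \sum_(T in powerset S) (-1) ^+ (#|S| - #|T|) * (q%:R ^+ #|~: T|)^-1 *
     (if [forall i in T, val (m i) == 0%N] then 1 else 0)
  = (-1) ^+ #|S| * ((q%:R ^+ n)^-1 * (1 - q%:R) ^+ #|S :&: zeros m| : R).
Proof.
transitivity (\sum_(T in powerset (S :&: zeros m))
   (-1) ^+ #|S| * (q%:R ^+ n)^-1 * (- q%:R) ^+ #|T| : R); last first.
  by rewrite -mulr_sumr sum_powerset_expr mulrA.
rewrite [LHS]big_mkcond [RHS]big_mkcond; apply: eq_bigr => T _.
have -> : [forall i in T, val (m i) == 0%N] = (T \subset zeros m).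
  by apply/forall_inP/subsetP => zT i /zT; rewrite inE.
rewrite powersetI in_setI !powersetE.
case: (boolP (T \subset S)) => sTS; case: (boolP (T \subset zeros m)) => sTz //=;
  rewrite ?mulr0 ?mulr1 //.
rewrite signr_subn ?subset_leq_card // (exprNn (q%:R : R)).
have -> : (q%:R : R) ^+ n = q%:R ^+ #|T| * q%:R ^+ #|~: T|.
  by rewrite -exprD cardsC card_ord.
by rewrite invfM; field; rewrite !expf_neq0 ?natq_neq0.
Qed.

Lemma amob_qmobius (f : vec -> R) (S : {set 'I_n}) :
  amob f S = (-1) ^+ #|S| *
    \sum_(k : vec | [forall j in S, val (k j) != 0%N])
       ((q%:R ^+ nnz k)^-1 * qmobius f k).
Proof.
have amob_coef : amob f S = \sum_(m : vec)
    ((-1) ^+ #|S| * ((q%:R ^+ n)^-1 * (1 - q%:R) ^+ #|S :&: zeros m|)) * f m.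
  rewrite /amob (eq_bigr (fun T : {set 'I_n} => \sum_(m : vec) ((-1) ^+ (#|S| - #|T|) *
     (q%:R ^+ #|~: T|)^-1 * (if [forall i in T, val (m i) == 0%N] then 1 else 0)) * f m)).
    by rewrite exchange_big; apply: eq_bigr => m _; rewrite -mulr_suml sum_powerset_vfun_weight.
  move=> T _; rewrite /vfun big_mkcond mulrA mulr_sumr.
  by apply: eq_bigr => m _; case: ifP => _; rewrite ?mulr1 ?mul1r ?mulr0 ?mul0r.
have mobius_coef : \sum_(k : vec | [forall j in S, val (k j) != 0%N])
    ((q%:R ^+ nnz k)^-1 * qmobius f k) = \sum_(m : vec) (\sum_k mobius_weight S m k) * f m.
  under [RHS]eq_bigr => m _ do rewrite mulr_suml.
  rewrite exchange_big /= [LHS]big_mkcond; apply: eq_bigr => k _.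
  rewrite /mobius_weight; case: ifP => nzS /=; last by rewrite big1 // => m _; rewrite mul0r.
  rewrite /qmobius mulr_sumr [LHS]big_mkcond; apply: eq_bigr => m _.
  by case: ifP => _; rewrite ?mulr0 ?mul0r // mulrA.
rewrite amob_coef mobius_coef mulr_sumr; apply: eq_bigr => m _.
by rewrite sum_mobius_weight !mulrA.
Qed.

Lemma amob_eq0_of_qmobius_eq0 (f : vec -> R) (ell : nat) (S : {set 'I_n}) :
  (forall k, (ell < nnz k)%N -> qmobius f k = 0) -> (ell < #|S|)%N -> amob f S = 0.
Proof.
move=> hM lt_ell_S; rewrite amob_qmobius big1 ?mulr0 // => k /forall_inP nzS.
rewrite hM ?mulr0 //; apply: leq_trans lt_ell_S (subset_leq_card _).
by apply/subsetP => i /nzS; rewrite inE.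
Qed.

End MobiusExpansion.

Lemma FSI_eq_amob (R : realFieldType) (q n ell : nat) (f : {ffun 'I_n -> 'I_q} -> R)
    (T : {set 'I_n}) :
  (forall S : {set 'I_n}, (ell < #|S|)%N -> amob f S = 0) -> FSI f ell T = amob f T.
Proof.
move=> amob_high; rewrite /FSI big1 ?mulr0 ?addr0 // => S /andP [_ /amob_high ->].
by rewrite mulr0.
Qed.

Theorem theorem3 (R : realFieldType) (q n ell : nat)
  (hq : (2 <= q)%N) (hn : (1 <= n)%N) (hl1 : (1 <= ell)%N) (hln : (ell <= n)%N)
  (f : {ffun 'I_n -> 'I_q} -> R)
  (hM : forall k : {ffun 'I_n -> 'I_q}, (ell < nnz k)%N -> qmobius f k = 0)
  (T : {set 'I_n}) (hT : (#|T| <= ell)%N) :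
  FSI f ell T = amob f T /\
  amob f T = (-1) ^+ #|T| *
    \sum_(k : {ffun 'I_n -> 'I_q} | [forall j in T, val (k j) != 0%N])
       ((q%:R ^+ nnz k)^-1 * qmobius f k).
Proof.
move: f hM; case: q hq => [|q'] // _ f hM.
split; last exact: amob_qmobius.
by apply: FSI_eq_amob => S; apply: amob_eq0_of_qmobius_eq0 hM.
Qed.
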